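(* Let $U$ be a machine such that for every machine $V$ there exists a total computable length-bounded function $h$ such that $U(h(x))=V(x)$ whenever $V(x)$ is defined (with no requirement on $U(h(x))$ when $V(x)$ is undefined). Then $U$ is effectively optimal.
   Context: A machine is a partial computable function from binary strings to binary strings. A total function $h$ on strings is length-bounded if $|h(x)|\le|x|+c$ for some $c$ and all $x$. $U$ is effectively optimal if for every machine $V$ there is a total computable length-bounded $h$ with $V(x)=U(h(x))$ for all $x$ (both sides undefined, or both defined and equal). *)

(* A model of computation: partial (mu-)recursive functions on
   nat, with binary strings encoded by the bijective base-2 numbering. *)
From Stdlib Require Import Arith List.
Import ListNotations.

Inductive prf : Type :=
| PZero : prf
| PSucc : prf
| PProj : nat -> prf
| PComp : prf -> list prf -> prf
| PRec  : prf -> prf -> prf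
| PMin  : prf -> prf.

Inductive eval : prf -> list nat -> nat -> Prop :=
| ev_zero : forall v, eval PZero v 0
| ev_succ : forall v, eval PSucc v (S (hd 0 v))
| ev_proj : forall i v, eval (PProj i) v (nth i v 0)
| ev_comp : forall f gs v ws y,
    evals gs v ws -> eval f ws y -> eval (PComp f gs) v y
| ev_rec0 : forall f g rest y,
    eval f rest y -> eval (PRec f g) (0 :: rest) y
| ev_recS : forall f g n rest z y,
    eval (PRec f g) (n :: rest) z -> eval g (n :: z :: rest) y ->
    eval (PRec f g) (S n :: rest) y
| ev_min : forall f v n,
    eval f (n :: v) 0 ->
    (forall m, m < n -> exists k, eval f (m :: v) (S k)) ->
    eval (PMin f) v n
with evals : list prf -> list nat -> list nat -> Prop :=
| evs_nil : forall v, evals [] v []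
| evs_cons : forall g gs v w ws,
    eval g v w -> evals gs v ws -> evals (g :: gs) v (w :: ws).

Definition bstring := list bool.

Fixpoint code (s : bstring) : nat :=
  match s with
  | [] => 0
  | b :: s' => 2 * code s' + 1 + (if b then 1 else 0)
  end.

Definition machine (M : bstring -> option bstring) : Prop :=
  exists e : prf, forall x y, M x = Some y <-> eval e [code x] (code y).

Definition total_computable (h : bstring -> bstring) : Prop :=
  exists e : prf, forall x, eval e [code x] (code (h x)).

Definition length_bounded (h : bstring -> bstring) : Prop :=
  exists c : nat, forall x, length (h x) <= length x + c.

Definition effectively_optimal (U : bstring -> option bstring) : Prop :=
  forall V, machine V ->
    exists h, total_computable h /\ length_bounded h /\
      forall x, V x = U (h x).

From Stdlib Require Import Arith List Lia Wf_nat ClassicalEpsilon.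
Import ListNotations.

(* Given V, let W be the machine which on input [1^E 0 x] runs the program [E] on
   its whole input, obtaining some [p], and then dovetails V on [x] against U on [p]:
   if V halts first, W copies its output; if U halts first, W outputs something
   else.  The hypothesis yields a length-bounded simulation [h] of W in U, computed
   by some program [E]; put [h' x := h (1^E 0 x)].  Whenever W halts on [1^E 0 x],
   U returns the same output on [h' x], so U can never win the race; hence U halts
   on [h' x] exactly when V halts on [x], and then with the same output.  Running
   programs for a bounded number of steps is made primitive recursive through an
   explicit stack machine for partial recursive functions, coded by Cantor pairing. *)

Definition computable (F : list nat -> nat) : Prop :=
  exists e, forall v, eval e v (F v).

Definition computable1 (f : nat -> nat) :=
  computable (fun v => f (nth 0 v 0)).
Definition computable2 (f : nat -> nat -> nat) :=
  computable (fun v => f (nth 0 v 0) (nth 1 v 0)).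
Definition computable3 (f : nat -> nat -> nat -> nat) :=
  computable (fun v => f (nth 0 v 0) (nth 1 v 0) (nth 2 v 0)).
Definition computable4 (f : nat -> nat -> nat -> nat -> nat) :=
  computable (fun v => f (nth 0 v 0) (nth 1 v 0) (nth 2 v 0) (nth 3 v 0)).

Lemma computable_ext F G : computable F -> (forall v, F v = G v) -> computable G.
Proof. intros [e He] FG; exists e; intro v; rewrite <- FG; apply He. Qed.

Lemma computable_proj i : computable (fun v => nth i v 0).
Proof. exists (PProj i); intro; constructor. Qed.

Lemma computable_succ : computable1 S.
Proof. exists PSucc; intros [|n v]; constructor. Qed.

Lemma computable_const n : computable (fun _ => n).
Proof.
  induction n as [|n [e He]].
  - exists PZero; intro; constructor.
  - exists (PComp PSucc [e]); intro v.
    econstructor; [constructor; [apply He | constructor] | apply ev_succ].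
Qed.

Lemma computable_comp1 f A :
  computable1 f -> computable A -> computable (fun v => f (A v)).
Proof.
  intros [e He] [a Ha]; exists (PComp e [a]); intro v.
  econstructor; [repeat (constructor; [eauto|]); constructor | apply (He [A v])].
Qed.

Lemma computable_comp2 f A B :
  computable2 f -> computable A -> computable B -> computable (fun v => f (A v) (B v)).
Proof.
  intros [e He] [a Ha] [b Hb]; exists (PComp e [a; b]); intro v.
  econstructor; [repeat (constructor; [eauto|]); constructor | apply (He [A v; B v])].
Qed.

Lemma computable_comp3 f A B C :
  computable3 f -> computable A -> computable B -> computable C ->
  computable (fun v => f (A v) (B v) (C v)).
Proof.
  intros [e He] [a Ha] [b Hb] [c Hc]; exists (PComp e [a; b; c]); intro v.
  econstructor; [repeat (constructor; [eauto|]); constructor | apply (He [A v; B v; C v])].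
Qed.

Lemma computable_comp4 f A B C D :
  computable4 f -> computable A -> computable B -> computable C -> computable D ->
  computable (fun v => f (A v) (B v) (C v) (D v)).
Proof.
  intros [e He] [a Ha] [b Hb] [c Hc] [d Hd]; exists (PComp e [a; b; c; d]); intro v.
  econstructor; [repeat (constructor; [eauto|]); constructor | apply (He [A v; B v; C v; D v])].
Qed.

Fixpoint primrec (b : nat -> nat) (s : nat -> nat -> nat -> nat) (n p : nat) : nat :=
  match n with 0 => b p | S i => s i (primrec b s i p) p end.

Lemma computable_primrec b s : computable1 b -> computable3 s -> computable2 (primrec b s).
Proof.
  intros [eb Hb] [es Hs].
  exists (PComp (PRec eb es) [PProj 0; PProj 1]); intro v.
  econstructor; [repeat (constructor; [constructor|]); constructor|]; cbn [nth].
  induction (nth 0 v 0) as [|i IH]; cbn [primrec].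
  - constructor; apply (Hb [nth 1 v 0]).
  - econstructor; [apply IH | apply (Hs [i; _; nth 1 v 0])].
Qed.

Lemma computable_iter f : computable1 f -> computable2 (fun n x => Nat.iter n f x).
Proof.
  intro Hf; eapply computable_ext.
  - apply (computable_primrec (fun p => p) (fun _ z _ => f z)).
    + apply computable_proj.
    + exact (computable_comp1 f _ Hf (computable_proj 1)).
  - intro v; cbv beta; induction (nth 0 v 0) as [|n IH]; cbn [primrec]; [reflexivity|].
    now rewrite IH.
Qed.

Create HintDb computable.
#[export] Hint Resolve computable_succ : computable.

Ltac solve_computable :=
  match goal with
  | |- computable (fun _ => ?c) => apply computable_const
  | |- computable (fun v => nth ?i v 0) => apply computable_proj
  | |- computable (fun v => primrec ?b ?s (@?A v) (@?B v)) =>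
      refine (computable_comp2 (primrec b s) A B
                (computable_primrec b s _ _) _ _);
      [ unfold computable1; cbv beta; solve_computable
      | unfold computable3; cbv beta; solve_computable
      | solve_computable | solve_computable ]
  | |- computable (fun v => Nat.iter (@?A v) ?f (@?B v)) =>
      refine (computable_comp2 (fun n x => Nat.iter n f x) A B
                (computable_iter f _) _ _);
      [ unfold computable1; cbv beta; solve_computable
      | solve_computable | solve_computable ]
  | |- computable (fun v => ?f (@?A v) (@?B v) (@?C v) (@?D v)) =>
      refine (computable_comp4 f A B C D _ _ _ _ _);
      [ solve [eauto with computable] | solve_computable | solve_computable
      | solve_computable | solve_computable ]
  | |- computable (fun v => ?f (@?A v) (@?B v) (@?C v)) =>
      refine (computable_comp3 f A B C _ _ _ _);
      [ solve [eauto with computable] | solve_computable | solve_computable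
      | solve_computable ]
  | |- computable (fun v => ?f (@?A v) (@?B v)) =>
      refine (computable_comp2 f A B _ _ _);
      [ solve [eauto with computable] | solve_computable | solve_computable ]
  | |- computable (fun v => ?f (@?A v)) =>
      refine (computable_comp1 f A _ _);
      [ solve [eauto with computable] | solve_computable ]
  end.

Lemma computable_add : computable2 Nat.add.
Proof.
  eapply computable_ext with (F := fun v => Nat.iter (nth 0 v 0) S (nth 1 v 0));
    [solve_computable|].
  intro v; induction (nth 0 v 0) as [|n IH]; [reflexivity | now rewrite Nat.iter_succ, IH].
Qed.
#[export] Hint Resolve computable_add : computable.

Lemma computable_pred : computable1 Nat.pred.
Proof.
  eapply computable_ext with
    (F := fun v => primrec (fun _ => 0) (fun i _ _ => i) (nth 0 v 0) 0);
    [solve_computable|].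
  intro v; now destruct (nth 0 v 0).
Qed.
#[export] Hint Resolve computable_pred : computable.

Lemma computable_sub : computable2 Nat.sub.
Proof.
  eapply computable_ext with (F := fun v => Nat.iter (nth 1 v 0) Nat.pred (nth 0 v 0));
    [solve_computable|].
  intro v; induction (nth 1 v 0) as [|n IH]; [cbn; lia | rewrite Nat.iter_succ, IH; lia].
Qed.
#[export] Hint Resolve computable_sub : computable.

Lemma computable_mul : computable2 Nat.mul.
Proof.
  eapply computable_ext with
    (F := fun v => primrec (fun _ => 0) (fun _ z p => z + p) (nth 0 v 0) (nth 1 v 0));
    [solve_computable|].
  intro v; induction (nth 0 v 0) as [|n IH]; cbn [primrec]; [reflexivity | rewrite IH; lia].
Qed.
#[export] Hint Resolve computable_mul : computable.

Definition ifnz (c a b : nat) : nat := match c with 0 => b | S _ => a end.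

Lemma computable_ifnz : computable3 ifnz.
Proof.
  eapply computable_ext with (F := fun v =>
    nth 1 v 0 * (1 - (1 - nth 0 v 0)) + nth 2 v 0 * (1 - nth 0 v 0)); [solve_computable|].
  intro v; destruct (nth 0 v 0); cbn [ifnz]; lia.
Qed.
#[export] Hint Resolve computable_ifnz : computable.

Definition eqb01 (a b : nat) : nat := Nat.b2n (a =? b).
Definition leb01 (a b : nat) : nat := Nat.b2n (a <=? b).

Lemma computable_eqb01 : computable2 eqb01.
Proof.
  eapply computable_ext with
    (F := fun v => ifnz ((nth 0 v 0 - nth 1 v 0) + (nth 1 v 0 - nth 0 v 0)) 0 1);
    [solve_computable|].
  intro v; unfold eqb01; destruct (Nat.eqb_spec (nth 0 v 0) (nth 1 v 0)).
  - now replace (_ + _) with 0 by lia.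
  - now destruct (_ + _) eqn:E; [lia|].
Qed.

Lemma computable_leb01 : computable2 leb01.
Proof.
  eapply computable_ext with (F := fun v => ifnz (nth 0 v 0 - nth 1 v 0) 0 1);
    [solve_computable|].
  intro v; unfold leb01; destruct (Nat.leb_spec (nth 0 v 0) (nth 1 v 0)).
  - now replace (_ - _) with 0 by lia.
  - now destruct (_ - _) eqn:E; [lia|].
Qed.
#[export] Hint Resolve computable_eqb01 computable_leb01 : computable.

Fixpoint triangle (n : nat) : nat := match n with 0 => 0 | S i => triangle i + S i end.

Fixpoint triangle_root (z : nat) : nat :=
  match z with
  | 0 => 0
  | S z' => if triangle (S (triangle_root z')) <=? S z'
            then S (triangle_root z') else triangle_root z'
  end.

Lemma computable_triangle : computable1 triangle.
Proof.
  eapply computable_ext with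
    (F := fun v => primrec (fun _ => 0) (fun i z _ => z + S i) (nth 0 v 0) 0);
    [solve_computable|].
  intro v; induction (nth 0 v 0) as [|n IH]; cbn [primrec triangle]; congruence.
Qed.
#[export] Hint Resolve computable_triangle : computable.

Lemma computable_triangle_root : computable1 triangle_root.
Proof.
  eapply computable_ext with (F := fun v =>
    primrec (fun _ => 0) (fun i d _ => ifnz (leb01 (triangle (S d)) (S i)) (S d) d)
      (nth 0 v 0) 0); [solve_computable|].
  intro v; induction (nth 0 v 0) as [|n IH]; cbn [primrec triangle_root]; [reflexivity|].
  rewrite IH; unfold leb01; now destruct (_ <=? _).
Qed.
#[export] Hint Resolve computable_triangle_root : computable.

Lemma triangle_root_spec z : triangle (triangle_root z) <= z < triangle (S (triangle_root z)).
Proof.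
  induction z as [|z IH]; cbn [triangle_root]; [cbn; lia|].
  destruct (Nat.leb_spec (triangle (S (triangle_root z))) (S z)); cbn [triangle] in *; lia.
Qed.

Lemma triangle_mono a b : a <= b -> triangle a <= triangle b.
Proof. induction 1; cbn [triangle]; lia. Qed.

Lemma triangle_root_unique z d :
  triangle d <= z < triangle (S d) -> triangle_root z = d.
Proof.
  intro Hd; pose proof (triangle_root_spec z).
  destruct (Nat.lt_trichotomy (triangle_root z) d) as [L|[L|L]]; trivial.
  - pose proof (triangle_mono (S (triangle_root z)) d L); lia.
  - pose proof (triangle_mono (S d) (triangle_root z) L); lia.
Qed.

Definition cpair (a b : nat) : nat := triangle (a + b) + b.
Definition csnd (z : nat) : nat := z - triangle (triangle_root z).
Definition cfst (z : nat) : nat := triangle_root z - csnd z.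

Lemma computable_cpair : computable2 cpair.
Proof. unfold computable2, cpair; solve_computable. Qed.
Lemma computable_csnd : computable1 csnd.
Proof. unfold computable1, csnd; solve_computable. Qed.
Lemma computable_cfst : computable1 cfst.
Proof. unfold computable1, cfst, csnd; solve_computable. Qed.
#[export] Hint Resolve computable_cpair computable_cfst computable_csnd : computable.

Lemma triangle_root_cpair a b : triangle_root (cpair a b) = a + b.
Proof. apply triangle_root_unique; unfold cpair; cbn [triangle]; lia. Qed.

Lemma csnd_cpair a b : csnd (cpair a b) = b.
Proof. unfold csnd; rewrite triangle_root_cpair; unfold cpair; lia. Qed.

Lemma cfst_cpair a b : cfst (cpair a b) = a.
Proof. unfold cfst; rewrite csnd_cpair, triangle_root_cpair; lia. Qed.

(* Keeps [cbn] from unfolding the pairing in the symbolic computations below. *)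
Opaque cpair cfst csnd.

Definition ccons (a l : nat) : nat := S (cpair a l).
Definition chd (c : nat) : nat := cfst (Nat.pred c).
Definition ctl (c : nat) : nat := csnd (Nat.pred c).

Fixpoint clist (l : list nat) : nat :=
  match l with [] => 0 | x :: l => ccons x (clist l) end.

Definition cnth (i c : nat) : nat := chd (Nat.iter i ctl c).

Lemma computable_ccons : computable2 ccons.
Proof. unfold computable2, ccons; solve_computable. Qed.
Lemma computable_chd : computable1 chd.
Proof. unfold computable1, chd; solve_computable. Qed.
Lemma computable_ctl : computable1 ctl.
Proof. unfold computable1, ctl; solve_computable. Qed.
#[export] Hint Resolve computable_ccons computable_chd computable_ctl : computable.
Lemma computable_cnth : computable2 cnth.
Proof. unfold computable2, cnth; solve_computable. Qed.
#[export] Hint Resolve computable_cnth : computable.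

Lemma chd_ccons a l : chd (ccons a l) = a.
Proof. apply cfst_cpair. Qed.
Lemma ctl_ccons a l : ctl (ccons a l) = l.
Proof. apply csnd_cpair. Qed.

Lemma chd_clist l : chd (clist l) = hd 0 l.
Proof. destruct l; [reflexivity | apply chd_ccons]. Qed.
Lemma ctl_clist l : ctl (clist l) = clist (tl l).
Proof. destruct l; [reflexivity | apply ctl_ccons]. Qed.

Lemma cnth_clist i l : cnth i (clist l) = nth i l 0.
Proof.
  unfold cnth; revert l; induction i as [|i IH]; intro l.
  - destruct l; [reflexivity | apply chd_ccons].
  - rewrite Nat.iter_succ_r, ctl_clist, IH; destruct l; [destruct i|]; reflexivity.
Qed.

Fixpoint prf_code (f : prf) : nat :=
  match f with
  | PZero => cpair 0 0
  | PSucc => cpair 1 0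
  | PProj i => cpair 2 i
  | PComp f gs => cpair 3 (cpair (prf_code f) (clist (rev (map prf_code gs))))
  | PRec f g => cpair 4 (cpair (prf_code f) (prf_code g))
  | PMin f => cpair 5 (prf_code f)
  end.

(* An abstract machine with an explicit stack.  [FComp f t v acc] still has to
   evaluate the argument functions [t] (in reverse order) on [v], having already
   collected the values [acc]; [FRec g i n rest] is at stage [i] of [n] of a
   recursion; [FMin f m v] waits for the value of [f] at [m :: v]. *)
Inductive frame :=
| FComp (f : prf) (t : list prf) (v acc : list nat)
| FRec (g : prf) (i n : nat) (rest : list nat)
| FMin (f : prf) (m : nat) (v : list nat).

Inductive state :=
| Call (f : prf) (v : list nat) (K : list frame)
| Ret (r : nat) (K : list frame).

Definition step (s : state) : state :=
  match s with
  | Call PZero v K => Ret 0 K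
  | Call PSucc v K => Ret (S (hd 0 v)) K
  | Call (PProj i) v K => Ret (nth i v 0) K
  | Call (PComp f gs) v K =>
      match rev gs with
      | [] => Call f [] K
      | g :: t => Call g v (FComp f t v [] :: K)
      end
  | Call (PRec f g) [] K => s
  | Call (PRec f g) (n :: rest) K => Call f rest (FRec g 0 n rest :: K)
  | Call (PMin f) v K => Call f (0 :: v) (FMin f 0 v :: K)
  | Ret _ [] => s
  | Ret r (FComp f [] v acc :: K) => Call f (r :: acc) K
  | Ret r (FComp f (g :: t) v acc :: K) => Call g v (FComp f t v (r :: acc) :: K)
  | Ret z (FRec g i n rest :: K) =>
      if i =? n then Ret z K else Call g (i :: z :: rest) (FRec g (S i) n rest :: K)
  | Ret 0 (FMin f m v :: K) => Ret m K
  | Ret (S _) (FMin f m v :: K) => Call f (S m :: v) (FMin f (S m) v :: K)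
  end.

Definition run (k : nat) (s : state) : state := Nat.iter k step s.

Lemma run_add a b s : run (a + b) s = run b (run a s).
Proof. unfold run; rewrite Nat.add_comm; apply Nat.iter_add. Qed.

Lemma run_halted k y : run k (Ret y []) = Ret y [].
Proof.
  induction k as [|k IH]; [reflexivity|].
  unfold run in *; rewrite Nat.iter_succ, IH; now destruct y.
Qed.

Definition cproj (i c : nat) : nat := cfst (Nat.iter i csnd c).
Definition cdrop (i c : nat) : nat := Nat.iter i csnd c.

Lemma computable_cproj : computable2 cproj.
Proof. unfold computable2, cproj; solve_computable. Qed.
Lemma computable_cdrop : computable2 cdrop.
Proof. unfold computable2, cdrop; solve_computable. Qed.
#[export] Hint Resolve computable_cproj computable_cdrop : computable.

Definition code_call (f v K : nat) : nat := cpair 0 (cpair f (cpair v K)).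
Definition code_ret (r K : nat) : nat := cpair 1 (cpair r K).
Definition code_fcomp (f t v acc : nat) : nat := cpair 0 (cpair f (cpair t (cpair v acc))).
Definition code_frec (g i n rest : nat) : nat := cpair 1 (cpair g (cpair i (cpair n rest))).
Definition code_fmin (f m v : nat) : nat := cpair 2 (cpair f (cpair m v)).

Lemma computable_code_call : computable3 code_call.
Proof. unfold computable3, code_call; solve_computable. Qed.
Lemma computable_code_ret : computable2 code_ret.
Proof. unfold computable2, code_ret; solve_computable. Qed.
Lemma computable_code_fcomp : computable4 code_fcomp.
Proof. unfold computable4, code_fcomp; solve_computable. Qed.
Lemma computable_code_frec : computable4 code_frec.
Proof. unfold computable4, code_frec; solve_computable. Qed.
Lemma computable_code_fmin : computable3 code_fmin.
Proof. unfold computable3, code_fmin; solve_computable. Qed.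
#[export] Hint Resolve computable_code_call computable_code_ret computable_code_fcomp
  computable_code_frec computable_code_fmin : computable.

Definition frame_code (fr : frame) : nat :=
  match fr with
  | FComp f t v acc => code_fcomp (prf_code f) (clist (map prf_code t)) (clist v) (clist acc)
  | FRec g i n rest => code_frec (prf_code g) i n (clist rest)
  | FMin f m v => code_fmin (prf_code f) m (clist v)
  end.

Definition stack_code (K : list frame) : nat := clist (map frame_code K).

Definition state_code (s : state) : nat :=
  match s with
  | Call f v K => code_call (prf_code f) (clist v) (stack_code K)
  | Ret r K => code_ret r (stack_code K)
  end.

(* [step] on codes; [s] is the code of the current state, returned when stuck. *)
Definition call_step (s f v K : nat) : nat :=
  ifnz (eqb01 (cfst f) 0) (code_ret 0 K)
 (ifnz (eqb01 (cfst f) 1) (code_ret (S (chd v)) K)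
 (ifnz (eqb01 (cfst f) 2) (code_ret (cnth (cdrop 1 f) v) K)
 (ifnz (eqb01 (cfst f) 3)
    (ifnz (eqb01 (cdrop 2 f) 0) (code_call (cproj 1 f) 0 K)
       (code_call (chd (cdrop 2 f)) v
          (ccons (code_fcomp (cproj 1 f) (ctl (cdrop 2 f)) v 0) K)))
 (ifnz (eqb01 (cfst f) 4)
    (ifnz (eqb01 v 0) s
       (code_call (cproj 1 f) (ctl v)
          (ccons (code_frec (cdrop 2 f) 0 (chd v) (ctl v)) K)))
 (ifnz (eqb01 (cfst f) 5)
    (code_call (cdrop 1 f) (ccons 0 v) (ccons (code_fmin (cdrop 1 f) 0 v) K))
    s))))).

Definition ret_step (r fr K : nat) : nat :=
  ifnz (eqb01 (cfst fr) 0)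
    (ifnz (eqb01 (cproj 2 fr) 0)
       (code_call (cproj 1 fr) (ccons r (cdrop 4 fr)) K)
       (code_call (chd (cproj 2 fr)) (cproj 3 fr)
          (ccons (code_fcomp (cproj 1 fr) (ctl (cproj 2 fr)) (cproj 3 fr)
                    (ccons r (cdrop 4 fr))) K)))
 (ifnz (eqb01 (cfst fr) 1)
    (ifnz (eqb01 (cproj 2 fr) (cproj 3 fr))
       (code_ret r K)
       (code_call (cproj 1 fr) (ccons (cproj 2 fr) (ccons r (cdrop 4 fr)))
          (ccons (code_frec (cproj 1 fr) (S (cproj 2 fr)) (cproj 3 fr) (cdrop 4 fr)) K)))
    (ifnz (eqb01 r 0) (code_ret (cproj 2 fr) K)
       (code_call (cproj 1 fr) (ccons (S (cproj 2 fr)) (cdrop 3 fr))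
          (ccons (code_fmin (cproj 1 fr) (S (cproj 2 fr)) (cdrop 3 fr)) K)))).

Definition code_step (s : nat) : nat :=
  ifnz (eqb01 (cfst s) 0)
    (call_step s (cproj 1 s) (cproj 2 s) (cdrop 3 s))
    (ifnz (eqb01 (cdrop 2 s) 0) s
       (ret_step (cproj 1 s) (chd (cdrop 2 s)) (ctl (cdrop 2 s)))).

Lemma computable_call_step : computable4 call_step.
Proof. unfold computable4, call_step; solve_computable. Qed.
Lemma computable_ret_step : computable3 ret_step.
Proof. unfold computable3, ret_step; solve_computable. Qed.
#[export] Hint Resolve computable_call_step computable_ret_step : computable.
Lemma computable_code_step : computable1 code_step.
Proof. unfold computable1, code_step; solve_computable. Qed.
#[export] Hint Resolve computable_code_step : computable.

Lemma eqb01_ccons_0 a l : eqb01 (ccons a l) 0 = 0.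
Proof. reflexivity. Qed.

Ltac simpl_codes :=
  repeat (unfold cproj, cdrop, stack_code; cbn [Nat.iter nat_rect map clist hd tl];
          rewrite ?cfst_cpair, ?csnd_cpair, ?chd_ccons, ?ctl_ccons, ?cnth_clist,
                  ?chd_clist, ?ctl_clist, ?eqb01_ccons_0; cbn [ifnz eqb01 Nat.eqb Nat.b2n]).

Lemma code_step_correct s : code_step (state_code s) = state_code (step s).
Proof.
  destruct s as [f v K | r K]; unfold code_step, state_code.
  - unfold code_call; simpl_codes; unfold call_step.
    destruct f as [| | i | f gs | f g | f]; cbn [step prf_code];
      try (rewrite <- map_rev; destruct (rev gs) as [|g t]);
      cbn [prf_code map]; simpl_codes; try reflexivity.
    destruct v; simpl_codes; reflexivity.
  - unfold code_ret; simpl_codes.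
    destruct K as [|[f t v acc | g i n rest | f m v] K]; simpl_codes.
    + now destruct r.
    + unfold ret_step, frame_code, code_fcomp; simpl_codes.
      destruct t; simpl_codes; now destruct r.
    + unfold ret_step, frame_code, code_frec; simpl_codes.
      unfold eqb01; destruct r; cbn [step]; destruct (i =? n); reflexivity.
    + unfold ret_step, frame_code, code_fmin; simpl_codes.
      now destruct r.
Qed.

(* [eval] has an occurrence of itself under an existential in [ev_min], so the
   induction principle generated by [Scheme] has no hypothesis for it. *)
Definition eval_mut_ind (P : prf -> list nat -> nat -> Prop)
  (Q : list prf -> list nat -> list nat -> Prop)
  (hz : forall v, P PZero v 0)
  (hs : forall v, P PSucc v (S (hd 0 v)))
  (hp : forall i v, P (PProj i) v (nth i v 0))
  (hc : forall f gs v ws y, evals gs v ws -> Q gs v ws -> eval f ws y -> P f ws y ->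
          P (PComp f gs) v y)
  (hr0 : forall f g rest y, eval f rest y -> P f rest y -> P (PRec f g) (0 :: rest) y)
  (hrS : forall f g n rest z y,
          eval (PRec f g) (n :: rest) z -> P (PRec f g) (n :: rest) z ->
          eval g (n :: z :: rest) y -> P g (n :: z :: rest) y ->
          P (PRec f g) (S n :: rest) y)
  (hm : forall f v n, eval f (n :: v) 0 -> P f (n :: v) 0 ->
          (forall m, m < n -> exists k, eval f (m :: v) (S k) /\ P f (m :: v) (S k)) ->
          P (PMin f) v n)
  (qn : forall v, Q [] v [])
  (qc : forall g gs v w ws, eval g v w -> P g v w -> evals gs v ws -> Q gs v ws ->
          Q (g :: gs) v (w :: ws)) :
  forall f v y, eval f v y -> P f v y :=
  fix F f v y (H : eval f v y) {struct H} : P f v y :=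
    match H in eval f v y return P f v y with
    | ev_zero v => hz v
    | ev_succ v => hs v
    | ev_proj i v => hp i v
    | ev_comp f gs v ws y Hs Hf => hc f gs v ws y Hs (G gs v ws Hs) Hf (F f ws y Hf)
    | ev_rec0 f g rest y Hf => hr0 f g rest y Hf (F _ _ _ Hf)
    | ev_recS f g n rest z y H1 H2 => hrS f g n rest z y H1 (F _ _ _ H1) H2 (F _ _ _ H2)
    | ev_min f v n H0 Hl =>
        hm f v n H0 (F _ _ _ H0)
          (fun m Hm => match Hl m Hm with
                       | ex_intro _ k Hk => ex_intro _ k (conj Hk (F _ _ _ Hk))
                       end)
    end
  with G gs v ws (H : evals gs v ws) {struct H} : Q gs v ws :=
    match H in evals gs v ws return Q gs v ws with
    | evs_nil v => qn v
    | evs_cons g gs v w ws Hg Hgs => qc g gs v w ws Hg (F _ _ _ Hg) Hgs (G _ _ _ Hgs)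
    end
  for F.

Definition reaches (s s' : state) : Prop := exists k, run k s = s'.

Lemma reaches_refl s : reaches s s.
Proof. now exists 0. Qed.

Lemma reaches_trans a b c : reaches a b -> reaches b c -> reaches a c.
Proof. intros [k1 H1] [k2 H2]; exists (k1 + k2); now rewrite run_add, H1. Qed.

Lemma reaches_step s s' : reaches (step s) s' -> reaches s s'.
Proof. intros [k H]; exists (S k); unfold run in *; now rewrite Nat.iter_succ_r. Qed.

Lemma step_ret_fcomp_nil r f v acc K :
  step (Ret r (FComp f [] v acc :: K)) = Call f (r :: acc) K.
Proof. now destruct r. Qed.

Lemma step_ret_fcomp_cons r f g t v acc K :
  step (Ret r (FComp f (g :: t) v acc :: K)) = Call g v (FComp f t v (r :: acc) :: K).
Proof. now destruct r. Qed.

Lemma step_ret_frec r g i n rest K :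
  step (Ret r (FRec g i n rest :: K)) =
  if i =? n then Ret r K else Call g (i :: r :: rest) (FRec g (S i) n rest :: K).
Proof. now destruct r. Qed.

Definition returns (v : list nat) (g : prf) (w : nat) : Prop :=
  forall K, reaches (Call g v K) (Ret w K).

Lemma fcomp_returns f v t ws r acc K y :
  Forall2 (returns v) (rev t) ws ->
  (forall K, reaches (Call f (ws ++ r :: acc) K) (Ret y K)) ->
  reaches (Ret r (FComp f t v acc :: K)) (Ret y K).
Proof.
  revert ws r acc; induction t as [|g t IH]; intros ws r acc Ht Hf.
  - inversion Ht; subst; apply reaches_step; rewrite step_ret_fcomp_nil; apply Hf.
  - cbn in Ht; apply Forall2_app_inv_l in Ht as (ws1 & ws2 & H1 & H2 & ->).
    inversion H2 as [|? w ? ? Hg H3]; subst; inversion H3; subst.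
    apply reaches_step; rewrite step_ret_fcomp_cons.
    eapply reaches_trans; [apply Hg|].
    apply (IH ws1); [exact H1|]; intro K'; rewrite <- app_assoc in Hf; apply Hf.
Qed.

(* The second clause strengthens the induction for [PRec]: the loop may also be
   entered with a larger bound [n], stopping in the intermediate frame. *)
Definition machine_evaluates (f : prf) (v : list nat) (y : nat) : Prop :=
  (forall K, reaches (Call f v K) (Ret y K)) /\
  match f, v with
  | PRec f0 g0, m :: rest => forall n K, m <= n ->
      reaches (Call f0 rest (FRec g0 0 n rest :: K)) (Ret y (FRec g0 m n rest :: K))
  | _, _ => True
  end.

Lemma rev_cons_inv {A} (gs t : list A) g : rev gs = g :: t -> gs = rev t ++ [g].
Proof. intro E; now rewrite <- (rev_involutive gs), E. Qed.

Lemma eval_machine_evaluates f v y : eval f v y -> machine_evaluates f v y.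
Proof.
  revert f v y.
  apply (eval_mut_ind machine_evaluates (fun gs v ws => Forall2 (returns v) gs ws)).
  - split; [intro; apply reaches_step, reaches_refl | exact I].
  - split; [intro; apply reaches_step, reaches_refl | exact I].
  - split; [intro; apply reaches_step, reaches_refl | exact I].
  - intros f gs v ws y _ Hgs _ [Hf _]; split; [|destruct f; exact I].
    intro K; apply reaches_step; cbn [step].
    destruct (rev gs) as [|g t] eqn:E.
    + assert (gs = []) as -> by (now rewrite <- (rev_involutive gs), E).
      inversion Hgs; subst; apply Hf.
    + apply rev_cons_inv in E as ->.
      apply Forall2_app_inv_l in Hgs as (ws1 & ws2 & H1 & H2 & ->).
      inversion H2 as [|? w ? ? Hg H3]; subst; inversion H3; subst.
      eapply reaches_trans; [apply Hg|].
      eapply fcomp_returns; [exact H1 | exact Hf].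
  - intros f g rest y _ [Hf _]; split.
    + intro K; apply reaches_step; eapply reaches_trans; [apply Hf|].
      apply reaches_step; rewrite step_ret_frec; apply reaches_refl.
    + intros n K _; apply Hf.
  - intros f g n rest z y _ [_ Hloop] _ [Hg _].
    assert (Hnext : forall n' K, S n <= n' ->
      reaches (Call f rest (FRec g 0 n' rest :: K)) (Ret y (FRec g (S n) n' rest :: K))).
    { intros n' K Hn; eapply reaches_trans; [apply Hloop; lia|].
      apply reaches_step; rewrite step_ret_frec.
      destruct (Nat.eqb_spec n n'); [lia | apply Hg]. }
    split; [|exact Hnext].
    intro K; apply reaches_step; eapply reaches_trans; [apply Hnext; lia|].
    apply reaches_step; rewrite step_ret_frec, Nat.eqb_refl; apply reaches_refl.
  - intros f v n _ [H0 _] Hl; split; [|exact I]; intro K.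
    assert (Hsearch : forall m, m <= n ->
      reaches (Call f (0 :: v) (FMin f 0 v :: K)) (Call f (m :: v) (FMin f m v :: K))).
    { induction m as [|m IH]; intro Hm; [apply reaches_refl|].
      eapply reaches_trans; [apply IH; lia|].
      destruct (Hl m) as [k [_ [Hk _]]]; [lia|].
      eapply reaches_trans; [apply Hk | apply reaches_step, reaches_refl]. }
    apply reaches_step; eapply reaches_trans; [apply (Hsearch n); lia|].
    eapply reaches_trans; [apply H0 | apply reaches_step, reaches_refl].
  - intro; constructor.
  - intros g gs v w ws _ [Hg _] _ Hgs; constructor; assumption.
Qed.

Inductive rec_loop (g : prf) : nat -> nat -> list nat -> nat -> nat -> Prop :=
| rec_loop_done n rest r : rec_loop g n n rest r r
| rec_loop_next i n rest r r' z :
    i <> n -> eval g (i :: r :: rest) r' -> rec_loop g (S i) n rest r' z ->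
    rec_loop g i n rest r z.

Inductive min_search (f : prf) : nat -> list nat -> nat -> nat -> Prop :=
| min_search_found m v : min_search f m v 0 m
| min_search_next m v k r' n :
    eval f (S m :: v) r' -> min_search f (S m) v r' n -> min_search f m v (S k) n.

(* [stack_yields K r y]: returning [r] to the stack [K] leads to the final value [y]. *)
Fixpoint stack_yields (K : list frame) (r y : nat) : Prop :=
  match K with
  | [] => r = y
  | FComp f t v acc :: K =>
      exists ws, evals (rev t) v ws /\
      exists r', eval f (ws ++ r :: acc) r' /\ stack_yields K r' y
  | FRec g i n rest :: K => exists z, rec_loop g i n rest r z /\ stack_yields K z y
  | FMin f m v :: K => exists n, min_search f m v r n /\ stack_yields K n y
  end.

Definition state_yields (s : state) (y : nat) : Prop :=
  match s with
  | Call f v K => exists r, eval f v r /\ stack_yields K r y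
  | Ret r K => stack_yields K r y
  end.

Lemma evals_app gs1 gs2 v ws1 ws2 :
  evals gs1 v ws1 -> evals gs2 v ws2 -> evals (gs1 ++ gs2) v (ws1 ++ ws2).
Proof. induction 1; cbn; [trivial | constructor; auto]. Qed.

Lemma rec_loop_eval f g i n rest r z :
  rec_loop g i n rest r z -> eval (PRec f g) (i :: rest) r -> eval (PRec f g) (n :: rest) z.
Proof. induction 1; [trivial | intro; apply IHrec_loop; econstructor; eauto]. Qed.

Lemma min_search_eval f m v r n :
  min_search f m v r n -> eval f (m :: v) r ->
  (forall j, j < m -> exists k, eval f (j :: v) (S k)) -> eval (PMin f) v n.
Proof.
  induction 1; intros Hm Hlt; [now constructor|].
  apply IHmin_search; [assumption|].
  intros j Hj; destruct (Nat.eq_dec j m) as [->|]; [eauto | apply Hlt; lia].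
Qed.

Lemma state_yields_step s y : state_yields (step s) y -> state_yields s y.
Proof.
  destruct s as [f v K | r K].
  - destruct f as [| | i | f gs | f g | f]; cbn [step state_yields]; intro H.
    1-3: eexists; split; [constructor | exact H].
    + destruct (rev gs) as [|g t] eqn:E.
      * assert (gs = []) as -> by (now rewrite <- (rev_involutive gs), E).
        destruct H as [r [Hr HK]]; exists r; split; [|exact HK].
        econstructor; [constructor | exact Hr].
      * apply rev_cons_inv in E as ->.
        destruct H as [w [Hw [ws [Hws [r' [Hf HK]]]]]]; exists r'; split; [|exact HK].
        econstructor; [|exact Hf]; apply evals_app; [exact Hws | repeat constructor; exact Hw].
    + destruct v as [|n rest]; [exact H|].
      destruct H as [z0 [Hz0 [z [Hl HK]]]]; exists z; split; [|exact HK].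
      eapply rec_loop_eval; [exact Hl | constructor; exact Hz0].
    + destruct H as [r0 [Hr0 [n [Hm HK]]]]; exists n; split; [|exact HK].
      eapply min_search_eval; [exact Hm | exact Hr0 | intros; lia].
  - intro H; destruct K as [|[f t v acc | g i n rest | f m v] K]; [now destruct r| | |].
    + destruct t as [|g t].
      * rewrite step_ret_fcomp_nil in H; destruct H as [r' [Hr' HK]].
        exists []; split; [constructor | eauto].
      * rewrite step_ret_fcomp_cons in H; destruct H as [w [Hw [ws [Hws [r' [Hf HK]]]]]].
        exists (ws ++ [w]); split.
        -- apply evals_app; [exact Hws | repeat constructor; exact Hw].
        -- exists r'; rewrite <- app_assoc; auto.
    + rewrite step_ret_frec in H; destruct (Nat.eqb_spec i n) as [<-|Hin].
      * exists r; split; [constructor | exact H].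
      * destruct H as [r' [Hr' [z [Hl HK]]]]; exists z; split; [econstructor; eauto | exact HK].
    + destruct r; cbn in H |- *.
      * exists m; split; [constructor | exact H].
      * destruct H as [r' [Hr' [n [Hm HK]]]]; exists n; split; [econstructor; eauto | exact HK].
Qed.

Lemma run_ret_eval f v k y : run k (Call f v []) = Ret y [] -> eval f v y.
Proof.
  intro Hrun.
  assert (Hy : state_yields (Call f v []) y).
  { revert Hrun; generalize (Call f v []) as s; induction k as [|k IH]; intros s Hrun.
    - change (s = Ret y []) in Hrun; now subst s.
    - apply state_yields_step, IH; unfold run in *; now rewrite <- Nat.iter_succ_r. }
  destruct Hy as [r [Hr ->]]; exact Hr.
Qed.

Definition code_run (k s : nat) : nat := Nat.iter k code_step s.

Lemma code_run_correct k s : code_run k (state_code s) = state_code (run k s).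
Proof.
  induction k as [|k IH]; [reflexivity|].
  unfold code_run, run in *; now rewrite !Nat.iter_succ, IH, code_step_correct.
Qed.

Definition halted_value (s : nat) : nat :=
  ifnz (eqb01 (cfst s) 1) (ifnz (eqb01 (cdrop 2 s) 0) (S (cproj 1 s)) 0) 0.

Lemma halted_value_state_code s :
  halted_value (state_code s) = match s with Ret r [] => S r | _ => 0 end.
Proof.
  unfold halted_value; destruct s as [f v K | r [|fr K]];
    unfold state_code, code_call, code_ret; simpl_codes; reflexivity.
Qed.

(* [bounded_eval (prf_code f) (clist v) k] is [S y] if [f] halts on [v] with
   value [y] within [k] steps of the machine, and [0] otherwise. *)
Definition bounded_eval (e v k : nat) : nat := halted_value (code_run k (code_call e v 0)).

Lemma computable_bounded_eval : computable3 bounded_eval.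
Proof.
  unfold computable3, bounded_eval, code_run, halted_value; solve_computable.
Qed.
#[export] Hint Resolve computable_bounded_eval : computable.

Lemma bounded_eval_run f v k :
  bounded_eval (prf_code f) (clist v) k = halted_value (state_code (run k (Call f v []))).
Proof. now rewrite <- code_run_correct. Qed.

Lemma bounded_eval_complete f v y :
  eval f v y -> exists k0, forall k, k0 <= k -> bounded_eval (prf_code f) (clist v) k = S y.
Proof.
  intro H; destruct (proj1 (eval_machine_evaluates f v y H) []) as [k0 Hk0].
  exists k0; intros k Hk; rewrite bounded_eval_run.
  replace k with (k0 + (k - k0)) by lia.
  now rewrite run_add, Hk0, run_halted, halted_value_state_code.
Qed.

Lemma bounded_eval_sound f v k y : bounded_eval (prf_code f) (clist v) k = S y -> eval f v y.
Proof.
  rewrite bounded_eval_run, halted_value_state_code.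
  destruct (run k (Call f v [])) as [|r [|]] eqn:E; try discriminate.
  intro Hr; injection Hr as ->; exact (run_ret_eval f v k y E).
Qed.

Lemma eval_deterministic f v y y' : eval f v y -> eval f v y' -> y = y'.
Proof.
  intros H H'.
  destruct (bounded_eval_complete f v y H) as [a Ha].
  destruct (bounded_eval_complete f v y' H') as [b Hb].
  apply Nat.succ_inj; rewrite <- (Ha (a + b)), <- (Hb (a + b)); lia.
Qed.

Lemma eval_min e F v n :
  (forall w, eval e w (F w)) -> F (n :: v) = 0 -> (forall m, m < n -> F (m :: v) <> 0) ->
  eval (PMin e) v n.
Proof.
  intros He H0 Hlt; constructor; [rewrite <- H0; apply He|].
  intros m Hm; specialize (Hlt m Hm).
  destruct (F (m :: v)) as [|k] eqn:E; [contradiction|].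
  exists k; rewrite <- E; apply He.
Qed.

Lemma least_zero (F : nat -> nat) k :
  F k = 0 -> exists m, F m = 0 /\ forall j, j < m -> F j <> 0.
Proof.
  intro Hk.
  destruct (dec_inh_nat_subset_has_unique_least_element (fun m => F m = 0))
    as [m [[Hm Hleast] _]]; [intro m; destruct (Nat.eq_dec (F m) 0); tauto | now exists k|].
  exists m; split; [exact Hm|]; intros j Hj Fj; specialize (Hleast j Fj); lia.
Qed.

Lemma code_inj s t : code s = code t -> s = t.
Proof.
  revert t; induction s as [|b s IH]; intros [|c t]; cbn; intro E; try lia; trivial.
  destruct b, c; try lia; f_equal; apply IH; lia.
Qed.

Lemma code_surj n : exists s, code s = n.
Proof.
  induction n as [n IH] using lt_wf_ind; destruct n as [|n]; [now exists []|].
  destruct (Nat.Even_or_Odd n) as [[c Hc]|[c Hc]];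
    (destruct (IH c) as [s Hs]; [lia|]); [exists (false :: s) | exists (true :: s)];
    cbn; lia.
Qed.

Lemma code_app s x : code (s ++ x) = code s + 2 ^ length s * code x.
Proof. induction s as [|b s IH]; cbn; [lia|]; rewrite IH; destruct b; ring. Qed.

Definition machine_of (e : prf) (p : bstring) : option bstring :=
  match excluded_middle_informative (exists y, eval e [code p] (code y)) with
  | left H => Some (proj1_sig (constructive_indefinite_description _ H))
  | right _ => None
  end.

Lemma machine_of_spec e p y : machine_of e p = Some y <-> eval e [code p] (code y).
Proof.
  unfold machine_of; destruct excluded_middle_informative as [H|H].
  - destruct (constructive_indefinite_description _ H) as [y' Hy']; cbn; split.
    + now intros [= <-].
    + intro Hy; f_equal; apply code_inj, (eval_deterministic e [code p]); assumption.
  - split; [discriminate | intro Hy; exfalso; eauto].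
Qed.

Lemma total_computable_prefix h s :
  total_computable h -> total_computable (fun x => h (s ++ x)).
Proof.
  intros [eh Hh].
  assert (Hshift : computable (fun v => code s + 2 ^ length s * nth 0 v 0))
    by solve_computable.
  destruct Hshift as [es Hs]; exists (PComp eh [es]); intro x.
  econstructor; [constructor; [apply Hs | constructor]|].
  cbn; rewrite <- code_app; apply Hh.
Qed.

Lemma length_bounded_prefix h s :
  length_bounded h -> length_bounded (fun x => h (s ++ x)).
Proof.
  intros [c Hc]; exists (length s + c); intro x.
  specialize (Hc (s ++ x)); rewrite length_app in Hc; lia.
Qed.

Definition unary_prefix (E : nat) : bstring := repeat true E ++ [false].

Definition even01 (n : nat) : nat := Nat.b2n (Nat.even n).

Lemma computable_even01 : computable1 even01.
Proof.
  eapply computable_ext with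
    (F := fun v => Nat.iter (nth 0 v 0) (fun z => 1 - z) 1); [solve_computable|].
  intro v; induction (nth 0 v 0) as [|n IH]; [reflexivity|].
  unfold even01 in *; rewrite Nat.iter_succ, IH, Nat.even_succ, <- Nat.negb_even.
  now destruct (Nat.even n).
Qed.
#[export] Hint Resolve computable_even01 : computable.

Lemma computable_div2 : computable1 Nat.div2.
Proof.
  eapply computable_ext with (F := fun v =>
    primrec (fun _ => 0) (fun i z _ => z + (1 - even01 i)) (nth 0 v 0) 0);
    [solve_computable|].
  intro v; induction (nth 0 v 0) as [|n IH]; [reflexivity|]; cbn [primrec]; rewrite IH.
  pose proof (Nat.div2_odd n) as Hn; pose proof (Nat.div2_odd (S n)) as HSn.
  rewrite Nat.odd_succ in HSn; unfold even01, Nat.odd in *.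
  destruct (Nat.even n); cbn in *; lia.
Qed.
#[export] Hint Resolve computable_div2 : computable.

(* Since [code (true :: s) = 2 * code s + 2], this removes [j] leading ones. *)
Definition strip_ones (j n : nat) : nat := Nat.iter j (fun m => Nat.div2 (m - 2)) n.

Lemma strip_ones_code j m x :
  strip_ones j (code (repeat true (m + j) ++ false :: x)) = code (repeat true m ++ false :: x).
Proof.
  revert m; induction j as [|j IH]; intro m; [now rewrite Nat.add_0_r|].
  unfold strip_ones in *; rewrite Nat.iter_succ.
  replace (m + S j) with (S m + j) by lia; rewrite IH; cbn [repeat app code].
  replace (_ + 1 + 1 - 2) with (2 * code (repeat true m ++ false :: x)) by lia.
  apply Nat.div2_double.
Qed.

Lemma strip_ones_unary_prefix j E x :
  j <= E ->
  strip_ones j (code (unary_prefix E ++ x)) = code (repeat true (E - j) ++ false :: x).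
Proof.
  intro Hj; unfold unary_prefix; rewrite <- app_assoc.
  replace E with (E - j + j) at 1 by lia; apply strip_ones_code.
Qed.

Lemma even_code_true s : Nat.even (code (true :: s)) = true.
Proof.
  cbn [code]; replace (2 * code s + 1 + 1) with (2 * (code s + 1)) by lia.
  apply Nat.even_even.
Qed.

Lemma even_code_false s : Nat.even (code (false :: s)) = false.
Proof. cbn [code]; rewrite Nat.add_0_r; apply Nat.even_odd. Qed.

(* [code (false :: s)] is odd and [code (true :: s)] even, so [unary_test E n] is
   [0] exactly when the [E] stripped ones are followed by a zero. *)
Definition unary_test (E n : nat) : nat := even01 (strip_ones E n).
Definition tail_code (E n : nat) : nat := Nat.div2 (strip_ones E n - 1).

Lemma unary_test_prefix E x : unary_test E (code (unary_prefix E ++ x)) = 0.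
Proof.
  unfold unary_test, even01; rewrite strip_ones_unary_prefix, Nat.sub_diag by lia.
  cbn [repeat app]; now rewrite even_code_false.
Qed.

Lemma unary_test_prefix_lt E j x : j < E -> unary_test j (code (unary_prefix E ++ x)) <> 0.
Proof.
  intro Hj; unfold unary_test, even01; rewrite strip_ones_unary_prefix by lia.
  replace (E - j) with (S (E - j - 1)) by lia; cbn [repeat app].
  now rewrite even_code_true.
Qed.

Lemma tail_code_prefix E x : tail_code E (code (unary_prefix E ++ x)) = code x.
Proof.
  unfold tail_code; rewrite strip_ones_unary_prefix, Nat.sub_diag by lia; cbn [repeat app code].
  replace (2 * code x + 1 + 0 - 1) with (2 * code x) by lia; apply Nat.div2_double.
Qed.

(* Run [k] steps of the program [E] on [n], of [eV] on the tail [x] of the input,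
   and of [eU] on the output of [E]: zero once [E] has halted and one of the
   other two has too. *)
Definition dovetail_test (eV eU k E n : nat) : nat :=
  ifnz (bounded_eval E (ccons n 0) k)
    (ifnz (bounded_eval eV (ccons (tail_code E n) 0) k) 0
       (ifnz (bounded_eval eU (ccons (bounded_eval E (ccons n 0) k - 1) 0) k) 0 1))
    1.

(* Copies the output of [eV] if it has halted, and otherwise answers with a code
   [ifnz r 0 1] different from the output [r] of [eU]. *)
Definition dovetail_output (eV eU k E n : nat) : nat :=
  ifnz (bounded_eval eV (ccons (tail_code E n) 0) k)
    (bounded_eval eV (ccons (tail_code E n) 0) k - 1)
    (ifnz (bounded_eval eU (ccons (bounded_eval E (ccons n 0) k - 1) 0) k - 1) 0 1).

Lemma simulator_exists eV eU : exists w, forall n E k,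
  unary_test E n = 0 -> (forall j, j < E -> unary_test j n <> 0) ->
  dovetail_test eV eU k E n = 0 -> (forall j, j < k -> dovetail_test eV eU j E n <> 0) ->
  eval w [n] (dovetail_output eV eU k E n).
Proof.
  assert (HT : computable (fun v => unary_test (nth 0 v 0) (nth 1 v 0)))
    by (unfold unary_test, strip_ones; solve_computable).
  assert (HD : computable (fun v => dovetail_test eV eU (nth 0 v 0) (nth 1 v 0) (nth 2 v 0)))
    by (unfold dovetail_test, tail_code, strip_ones; solve_computable).
  assert (HO : computable (fun v => dovetail_output eV eU (nth 0 v 0) (nth 1 v 0) (nth 2 v 0)))
    by (unfold dovetail_output, tail_code, strip_ones; solve_computable).
  destruct HT as [eT HT], HD as [eD HD], HO as [eO HO].
  exists (PComp (PComp eO [PMin eD; PProj 0; PProj 1]) [PMin eT; PProj 0]).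
  intros n E k T0 Tlt D0 Dlt.
  econstructor.
  { constructor; [|repeat constructor].
    eapply eval_min with (F := fun v => unary_test (nth 0 v 0) (nth 1 v 0)); eauto. }
  econstructor.
  { constructor; [|repeat constructor].
    eapply eval_min with
      (F := fun v => dovetail_test eV eU (nth 0 v 0) (nth 1 v 0) (nth 2 v 0)); eauto. }
  apply (HO [k; E; n]).
Qed.

Section Simulation.

Variables (U V : bstring -> option bstring) (eU eV : prf).
Hypothesis HU : forall x y, U x = Some y <-> eval eU [code x] (code y).
Hypothesis HV : forall x y, V x = Some y <-> eval eV [code x] (code y).

Variables (w eh : prf) (h : bstring -> bstring).
Hypothesis Hw : forall n E k,
  unary_test E n = 0 -> (forall j, j < E -> unary_test j n <> 0) ->
  dovetail_test (prf_code eV) (prf_code eU) k E n = 0 ->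
  (forall j, j < k -> dovetail_test (prf_code eV) (prf_code eU) j E n <> 0) ->
  eval w [n] (dovetail_output (prf_code eV) (prf_code eU) k E n).
Hypothesis Hh : forall p, eval eh [code p] (code (h p)).
Hypothesis Hsim : forall p y, eval w [code p] (code y) -> U (h p) = Some y.

Let test k x :=
  dovetail_test (prf_code eV) (prf_code eU) k (prf_code eh)
    (code (unary_prefix (prf_code eh) ++ x)).

Lemma bounded_eval_eh_code x k b :
  bounded_eval (prf_code eh) (ccons (code x) 0) k = S b -> b = code (h x).
Proof.
  intro Hb; apply (eval_deterministic eh [code x]); [|apply Hh].
  exact (bounded_eval_sound eh [code x] k b Hb).
Qed.

Lemma dovetail_test_zero_agree x k :
  test k x = 0 -> V x = U (h (unary_prefix (prf_code eh) ++ x)).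
Proof.
  intro Hk; destruct (least_zero (fun j => test j x) k Hk) as [k' [D0 Dlt]].
  pose proof (Hw _ _ k' (unary_test_prefix _ x) (fun j => unary_test_prefix_lt _ j x) D0 Dlt)
    as Hrun.
  unfold test, dovetail_test, dovetail_output in D0, Hrun.
  rewrite tail_code_prefix in D0, Hrun; set (p := unary_prefix (prf_code eh) ++ x) in *.
  destruct (bounded_eval (prf_code eh) (ccons (code p) 0) k') as [|b] eqn:Eh;
    [discriminate|]; apply bounded_eval_eh_code in Eh as ->.
  replace (S (code (h p)) - 1) with (code (h p)) in * by lia.
  destruct (bounded_eval (prf_code eV) (ccons (code x) 0) k') as [|r] eqn:EV;
    cbn [ifnz] in D0, Hrun.
  - destruct (bounded_eval (prf_code eU) (ccons (code (h p)) 0) k') as [|r] eqn:EU;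
      [discriminate|]; exfalso.
    apply (bounded_eval_sound eU [_]) in EU.
    replace (S r - 1) with r in Hrun by lia.
    destruct (code_surj (ifnz r 0 1)) as [y Hy]; rewrite <- Hy in Hrun.
    apply Hsim, HU in Hrun; pose proof (eval_deterministic _ _ _ _ EU Hrun) as Er.
    rewrite Hy in Er; destruct r; discriminate.
  - apply (bounded_eval_sound eV [_]) in EV.
    replace (S r - 1) with r in Hrun by lia.
    destruct (code_surj r) as [y <-]; apply Hsim in Hrun.
    rewrite Hrun; apply HV, EV.
Qed.

Lemma dovetail_test_zero_exists x :
  (exists y, V x = Some y) \/ (exists y, U (h (unary_prefix (prf_code eh) ++ x)) = Some y) ->
  exists k, test k x = 0.
Proof.
  intro Hhalt; unfold test, dovetail_test; rewrite tail_code_prefix.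
  set (p := unary_prefix (prf_code eh) ++ x) in *.
  destruct (bounded_eval_complete eh [code p] _ (Hh p)) as [k0 Hk0].
  destruct Hhalt as [[y Hy] | [y Hy]]; [apply HV in Hy | apply HU in Hy];
    destruct (bounded_eval_complete _ [_] _ Hy) as [k1 Hk1]; exists (k0 + k1);
    cbn [clist] in Hk0, Hk1; rewrite Hk0 by lia.
  - now rewrite Hk1 by lia.
  - replace (S (code (h p)) - 1) with (code (h p)) by lia.
    rewrite Hk1 by lia; now destruct (bounded_eval _ _ _).
Qed.

Lemma simulation_exact x : V x = U (h (unary_prefix (prf_code eh) ++ x)).
Proof.
  destruct (V x) as [y|] eqn:EV.
  - destruct (dovetail_test_zero_exists x (or_introl (ex_intro _ y EV))) as [k Hk].
    rewrite <- EV; exact (dovetail_test_zero_agree x k Hk).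
  - destruct (U (h _)) as [y|] eqn:EU; [|reflexivity].
    destruct (dovetail_test_zero_exists x (or_intror (ex_intro _ y EU))) as [k Hk].
    rewrite <- EV, <- EU; exact (dovetail_test_zero_agree x k Hk).
Qed.

End Simulation.

Theorem proposition2p9 (U : bstring -> option bstring) :
  machine U ->
  (forall V, machine V ->
     exists h, total_computable h /\ length_bounded h /\
       forall x y, V x = Some y -> U (h x) = Some y) ->
  effectively_optimal U.
Proof.
  intros [eU HU] Hopt V [eV HV].
  destruct (simulator_exists (prf_code eV) (prf_code eU)) as [w Hw].
  destruct (Hopt (machine_of w) (ex_intro _ w (machine_of_spec w)))
    as (h & [eh Hh] & Hbound & Hsim).
  exists (fun x => h (unary_prefix (prf_code eh) ++ x)); repeat split.
  - apply total_computable_prefix; now exists eh.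
  - now apply length_bounded_prefix.
  - apply (simulation_exact U V eU eV HU HV w eh h Hw Hh).
    intros p y Hy; now apply Hsim, machine_of_spec.
Qed.
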